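(* Let $(R,\mathfrak m)$ be a Noetherian local ring and $\mathfrak p,\mathfrak q$ prime ideals of $R$ with $\mathfrak p+\mathfrak q=\mathfrak m$, $\mathfrak p\cap\mathfrak q=\mathfrak p\mathfrak q$, and $R/\mathfrak q$ a discrete valuation ring. Then $\mathfrak p$ is principal. *)

From HB Require Import structures.
From mathcomp Require Import all_boot all_order all_algebra.
Set Implicit Arguments. Unset Strict Implicit. Unset Printing Implicit Defensive.
Import Order.TTheory GRing.Theory Num.Theory.
Local Open Scope ring_scope.

Section CommAlg.
Variable R : comNzRingType.

Definition is_ideal (I : R -> Prop) : Prop :=
  [/\ I 0, (forall x y, I x -> I y -> I (x + y)) &
      (forall r x, I x -> I (r * x))].

Definition proper_ideal (I : R -> Prop) : Prop := is_ideal I /\ ~ I 1.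

Definition gen_by (s : seq R) (x : R) : Prop :=
  exists c : seq R, size c = size s /\ x = \sum_(i < size s) c`_i * s`_i.

Definition principal (a : R) (x : R) : Prop := exists r : R, x = r * a.

Definition noetherian : Prop :=
  forall I : R -> Prop, is_ideal I ->
    exists s : seq R, forall x, I x <-> gen_by s x.

(* Local with maximal ideal m: m is a proper ideal containing every
   proper ideal (equivalently, m is the unique maximal ideal). *)
Definition local_with_max (m : R -> Prop) : Prop :=
  proper_ideal m /\
  forall J : R -> Prop, proper_ideal J -> forall x, J x -> m x.

Definition is_prime_ideal (p : R -> Prop) : Prop :=
  proper_ideal p /\ forall x y, p (x * y) -> p x \/ p y.

Definition ideal_sum (I J : R -> Prop) (x : R) : Prop :=
  exists a b, I a /\ J b /\ x = a + b.

Definition ideal_prod (I J : R -> Prop) (x : R) : Prop :=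
  exists s : seq (R * R),
    (forall ab, ab \in s -> I ab.1 /\ J ab.2) /\
    x = \sum_(ab <- s) ab.1 * ab.2.

Definition ideal_cap (I J : R -> Prop) (x : R) : Prop := I x /\ J x.

Definition ideal_eq (I J : R -> Prop) : Prop := forall x, I x <-> J x.

End CommAlg.

Definition is_DVR (S : idomainType) : Prop :=
  [/\ exists x : S, x != 0 /\ x \isn't a GRing.unit,
      (forall I : S -> Prop, is_ideal I -> exists a, ideal_eq I (principal a)) &
      exists m : S -> Prop, local_with_max m].

(* R/q is a DVR: there is a DVR S and a surjective ring morphism R -> S
   with kernel q (so S is isomorphic to R/q). *)
Definition quotient_is_DVR (R : comNzRingType) (q : R -> Prop) : Prop :=
  exists (S : idomainType) (f : {rmorphism R -> S}),
    (forall y : S, exists x : R, f x = y) /\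
    (forall x : R, f x = 0 <-> q x) /\ is_DVR S.

(** The image of [p] in the DVR [R/q] is principal, generated by the class of
    some [a] in [p].  For [x] in [p] pick [r] with [x = r a] modulo [q]; then
    [x - r a] lies in [p ∩ q = p q], so [p = (a) + q p].  Since [q ⊆ m], every
    [1 - c] with [c] in [q] is a unit, and Nakayama's lemma (in its elementary
    form for the finitely generated ideal [p]) gives [p = (a)]. *)
From Pilot Require Import Defs.
From HB Require Import structures.
From mathcomp Require Import all_boot all_order all_algebra.
From Stdlib Require Import Classical.
From mathcomp Require Import ring.
Set Implicit Arguments. Unset Strict Implicit. Unset Printing Implicit Defensive.
Import GRing.Theory.
Local Open Scope ring_scope.

Section Ideals.
Variable R : comNzRingType.
Implicit Types (I J P : R -> Prop) (s : seq R) (a c x y z : R).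

Lemma idealB I x y : is_ideal I -> I x -> I y -> I (x - y).
Proof. by case=> _ ID IM Ix Iy; apply: ID => //; rewrite -mulN1r; apply: IM. Qed.

Lemma principal_ideal a : is_ideal (principal a).
Proof.
split; first by exists 0; rewrite mul0r.
  by move=> _ _ [r1 ->] [r2 ->]; exists (r1 + r2); rewrite mulrDl.
by move=> r _ [r1 ->]; exists (r * r1); rewrite mulrA.
Qed.

Lemma local_one_sub_unit m c :
  local_with_max m -> m c -> exists u, u * (1 - c) = 1.
Proof.
move=> [[[_ mD _] m1] m_max] mc; apply: NNPP => no_inv.
have proper_1c : Defs.proper_ideal (principal (1 - c)).
  by split; [apply: principal_ideal | move=> [u /esym u_inv]; apply: no_inv; exists u].
have m_1c : m (1 - c) by apply: (m_max _ proper_1c); exists 1; rewrite mul1r.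
by apply: m1; rewrite -(subrK c 1); apply: mD.
Qed.

Fixpoint comb_over J s x : Prop :=
  match s with
  | [::] => x = 0
  | s0 :: s' => exists c y, J c /\ comb_over J s' y /\ x = c * s0 + y
  end.

Lemma gen_by_comb_over s x : gen_by s x <-> comb_over (fun=> True) s x.
Proof.
elim: s x => [|s0 s IH] x /=.
  by split=> [[c [_ ->]]|->]; [rewrite big_ord0 | exists [::]; rewrite big_ord0].
split.
  move=> [[|c0 c] [//= [size_c] ->]].
  rewrite big_ord_recl; exists c0, (\sum_(i < size s) c`_i * s`_i).
  by split=> //; split=> //; apply/IH; exists c.
move=> [c0 [y [_ [/IH [c [size_c ->]] ->]]]].
by exists (c0 :: c); rewrite /= size_c big_ord_recl.
Qed.

Lemma gen_by_mem s z : z \in s -> gen_by s z.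
Proof.
move=> s_z; apply/gen_by_comb_over; elim: s s_z => [|s0 s IH] //.
have comb0 t : comb_over (fun=> True) t 0.
  by elim: t => [|t0 t IHt] //=; exists 0, 0; rewrite mul0r addr0.
rewrite inE => /orP [/eqP ->|s_z].
  by exists 1, 0; rewrite mul1r addr0.
by exists 0, z; rewrite mul0r add0r; split=> //; split; [apply: IH|].
Qed.

Lemma comb_over_ideal I J s x :
  is_ideal I -> (forall z, z \in s -> I z) -> comb_over J s x -> I x.
Proof.
move=> [I0 ID IM]; elim: s x => [|s0 s IH] x s_I /=; first by move->.
move=> [c [y [_ [comb_y ->]]]]; apply: ID; first by apply/IM/s_I/mem_head.
by apply: IH comb_y => z s_z; apply: s_I; rewrite inE s_z orbT.
Qed.

Section CombOverIdeal.
Variable J : R -> Prop.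
Hypothesis idealJ : is_ideal J.

Lemma comb_over0 s : comb_over J s 0.
Proof.
case: idealJ => J0 _ _.
by elim: s => [|s0 s IH] //=; exists 0, 0; rewrite mul0r addr0.
Qed.

Lemma comb_overD s x y : comb_over J s x -> comb_over J s y -> comb_over J s (x + y).
Proof.
case: idealJ => _ JD _; elim: s x y => [|s0 s IH] x y /=; first by do 2!move->; rewrite addr0.
move=> [c [x' [Jc [comb_x' ->]]]] [d [y' [Jd [comb_y' ->]]]].
exists (c + d), (x' + y'); split; [exact: JD | split; [exact: IH | ring]].
Qed.

Lemma comb_overMl s r x : comb_over J s x -> comb_over J s (r * x).
Proof.
case: idealJ => _ _ JM; elim: s x => [|s0 s IH] x /=; first by move->; rewrite mulr0.
move=> [c [x' [Jc [comb_x' ->]]]].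
exists (r * c), (r * x'); split; [exact: JM | split; [exact: IH | ring]].
Qed.

Lemma gen_by_mulr_comb_over s u v : gen_by s u -> J v -> comb_over J s (u * v).
Proof.
case: idealJ => _ _ JM; move/gen_by_comb_over.
elim: s u => [|s0 s IH] u /=; first by move->; rewrite mul0r.
move=> [c [y [_ [comb_y ->]]]] Jv.
exists (c * v), (y * v); split; [exact: JM | split; [exact: IH | ring]].
Qed.

Lemma ideal_prod_comb_over P s x :
  (forall u, P u -> gen_by s u) -> ideal_prod P J x -> comb_over J s x.
Proof.
move=> P_gen [l [l_PJ ->]]; elim: l l_PJ => [|[u v] l IH] l_PJ.
  by rewrite big_nil; apply: comb_over0.
have [Pu Jv] := l_PJ _ (mem_head _ _).
rewrite big_cons; apply: comb_overD; first exact: gen_by_mulr_comb_over (P_gen _ Pu) Jv.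
by apply: IH => ab l_ab; apply: l_PJ; rewrite inE l_ab orbT.
Qed.

Hypothesis one_sub_unit : forall c, J c -> exists u, u * (1 - c) = 1.

(* Induction on [s]: solving [s0 = r a + c0 s0 + y] for [s0] eliminates the
   first generator from the other relations. *)
Lemma comb_over_principal a s :
  (forall z, z \in s -> exists r y, comb_over J s y /\ z = r * a + y) ->
  forall z, z \in s -> principal a z.
Proof.
elim: s => [|s0 s IH] rel //.
have [r [_ [[c0 [y [Jc0 [comb_y ->]]]] s0_eq]]] := rel s0 (mem_head _ _).
have [u u_inv] := one_sub_unit Jc0.
have s0_sol : s0 = (u * r) * a + u * y.
  have one_sub_s0 : (1 - c0) * s0 = r * a + y by rewrite mulrBl mul1r {1}s0_eq; ring.
  by rewrite -[LHS]mul1r -u_inv -[_ * _ * s0]mulrA one_sub_s0 mulrDr mulrA.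
have s_a : forall z, z \in s -> principal a z.
  apply: IH => z s_z.
  have [rz [_ [[d0 [yz [_ [comb_yz ->]]]] ->]]] := rel z (mem_behead (s := s0 :: s) s_z).
  exists (rz + d0 * (u * r)), (d0 * (u * y) + yz); split.
    by apply: comb_overD => //; do 2!apply: comb_overMl.
  by rewrite {1}s0_sol; ring.
move=> z; rewrite inE => /orP [/eqP ->|]; last exact: s_a.
rewrite s0_sol; case: (principal_ideal a) => _ aD aM.
apply: aD; first by exists (u * r).
by apply: aM; apply: comb_over_ideal (principal_ideal a) s_a comb_y.
Qed.

Lemma nakayama_principal P s a :
  (forall x, P x <-> gen_by s x) ->
  (forall x, P x -> exists r, ideal_prod P J (x - r * a)) ->
  forall x, P x -> principal a x.
Proof.
move=> P_gen P_near x /P_gen/gen_by_comb_over.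
apply: comb_over_ideal; first exact: principal_ideal.
apply: comb_over_principal => z /gen_by_mem/P_gen/P_near [r prod_r].
exists r, (z - r * a); split; last by rewrite addrC subrK.
by apply: ideal_prod_comb_over prod_r => v /P_gen.
Qed.

End CombOverIdeal.

End Ideals.

Lemma image_ideal (R S : comNzRingType) (f : {rmorphism R -> S}) (I : R -> Prop) :
  (forall y, exists x, f x = y) -> is_ideal I ->
  is_ideal (fun y => exists x, I x /\ f x = y).
Proof.
move=> f_surj [I0 ID IM]; split; first by exists 0; rewrite rmorph0.
  by move=> _ _ [x [Ix <-]] [y [Iy <-]]; exists (x + y); rewrite rmorphD; split; [apply: ID|].
move=> r' _ [x [Ix <-]]; have [r <-] := f_surj r'.
by exists (r * x); rewrite rmorphM; split; [apply: IM|].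
Qed.

Theorem lemma5p3 (R : comNzRingType) (m p q : R -> Prop) :
  noetherian R -> local_with_max m ->
  is_prime_ideal p -> is_prime_ideal q ->
  ideal_eq (ideal_sum p q) m ->
  ideal_eq (ideal_cap p q) (ideal_prod p q) ->
  quotient_is_DVR q ->
  exists a : R, ideal_eq p (principal a).
Proof.
move=> noethR local_m [[idp _] _] [[idq _] _] p_add_q p_cap_q
  [S [f [f_surj [ker_f [_ pidS _]]]]].
have [s gen_p] := noethR p idp.
have [t fp_t] := pidS _ (image_ideal f_surj idp).
have [a [pa fa]] : exists a, p a /\ f a = t by apply/fp_t; exists 1; rewrite mul1r.
have [p0 _ pM] := idp.
exists a => x; split; last by move=> [r ->]; apply: pM.
apply: (nakayama_principal idq _ gen_p).
  move=> c qc; apply: local_one_sub_unit local_m _.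
  apply/p_add_q; exists 0, c; split; [exact: p0 | split; [exact: qc | by rewrite add0r]].
move=> z pz; have [r' fz] : principal t (f z) by apply/fp_t; exists z.
have [r fr] := f_surj r'.
exists r; apply/p_cap_q; split; first by apply: idealB => //; apply: pM.
by apply/ker_f; rewrite rmorphB rmorphM fr fa fz subrr.
Qed.
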